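(* Let $S_3=\langle x,y\mid x^2=e,\ y^2=e,\ (xy)^3=e\rangle$ and $\Delta=\{x,y,z\}$ with $z=xyx$. Then $W=W_xU_x+W_yU_y+W_zU_z$ is a homogeneous scalar quantum walk on $C_\Delta(S_3)$ whenever, for real $\phi_1,\phi_2$, $W_x=\tfrac13(1+e^{i\phi_1}+e^{i\phi_2})$, $W_y=\tfrac13(1+e^{2\pi i/3}e^{i\phi_1}+e^{-2\pi i/3}e^{i\phi_2})$, $W_z=\tfrac13(1+e^{-2\pi i/3}e^{i\phi_1}+e^{2\pi i/3}e^{i\phi_2})$ and these values are nonzero; in particular $C_\Delta(S_3)$ admits a homogeneous scalar quantum walk.
   Context: The Cayley graph $C_\Delta(\Gamma)$ has vertex set $\Gamma$ and directed edges $(g,g\delta)$, $g\in\Gamma,\delta\in\Delta$. Let $\ell^2(\Gamma)$ have orthonormal basis $\{|g\rangle\}_{g\in\Gamma}$ and for $\delta\in\Gamma$ let $U_\delta|g\rangle=|g\delta\rangle$. A homogeneous scalar quantum walk on $C_\Delta(\Gamma)$ is a unitary operator $W=\sum_{\delta\in\Delta}W_\delta U_\delta$ with all complex coefficients $W_\delta$ nonzero. *)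

From mathcomp Require Import all_boot all_order all_algebra all_fingroup.
From mathcomp Require Import complex.
From mathcomp Require Import reals trigo.
Set Implicit Arguments. Unset Strict Implicit. Unset Printing Implicit Defensive.
Import GRing.Theory Num.Theory.
Local Open Scope ring_scope.

Definition expi (R : realType) (t : R) : R[i] := (cos t +i* sin t)%C.

(* Matrix entry <g| W |h> of W = \sum_{d in Delta} w d U_d on l^2(Gamma),
   where U_d |h> = |h d>.  So <g|U_d|h> = [g = h d]. *)
Definition walk_entry (R : realType) (gT : finGroupType) (Delta : {set gT})
  (w : gT -> R[i]) (g h : gT) : R[i] :=
  \sum_(d in Delta) w d * ((g == mulg h d) : bool)%:R.

(* Unitarity of an operator on l^2(Gamma) (Gamma finite) given by its matrix
   entries M g h = <g|M|h>: M^* M = I and M M^* = I. *)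
Definition unitary_op (R : realType) (gT : finGroupType)
  (M : gT -> gT -> R[i]) : Prop :=
  (forall g h : gT, \sum_(k : gT) conjc (M k g) * M k h = ((g == h) : bool)%:R)
  /\ (forall g h : gT, \sum_(k : gT) M g k * conjc (M h k) = ((g == h) : bool)%:R).

Definition homogeneous_scalar_QW (R : realType) (gT : finGroupType)
  (Delta : {set gT}) (w : gT -> R[i]) : Prop :=
  (forall d, d \in Delta -> w d != 0) /\ unitary_op (walk_entry Delta w).

(* S_3 = <x, y | x^2 = y^2 = (xy)^3 = e>, realised as 'S_3 with
   x = (0 1), y = (1 2) (these satisfy the relations and generate). *)
Definition s3x : 'S_3 := tperm (inord 0 : 'I_3) (inord 1).
Definition s3y : 'S_3 := tperm (inord 1 : 'I_3) (inord 2).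
Definition s3z : 'S_3 := mulg (mulg s3x s3y) s3x.
Definition s3Delta : {set 'S_3} := [set s3x; s3y; s3z].

(* Since x, y, z are involutions and every product of two of them is 1, r or
   r^-1 (r = xy), both W^* W and W W^* are combinations of the translations by
   1, r and r^-1 whose coefficients are the cyclic autocorrelations of
   (W_x, W_y, W_z).  This triple is the normalised discrete Fourier transform
   of the unimodular vector (1, e^{i phi_1}, e^{i phi_2}), so by orthogonality
   of the characters of Z/3 its autocorrelation is 1 at shift 0 and 0 at the
   other shifts; hence W is unitary. *)

From mathcomp Require Import all_boot all_order all_algebra all_fingroup.
From mathcomp Require Import complex.
From mathcomp Require Import reals trigo.
From mathcomp Require Import ring lra.

Set Implicit Arguments.
Unset Strict Implicit.
Unset Printing Implicit Defensive.
Import Order.TTheory GRing.Theory Num.Theory.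
Local Open Scope ring_scope.

Section UnityRoots.
Variables (R : idomainType) (n : nat).

Lemma sum_expr_unity (c : R) :
  c ^+ n = 1 -> \sum_(k < n) c ^+ k = if c == 1 then n%:R else 0.
Proof.
move=> cn1; have [->|c_neq1] := eqVneq c 1.
  by under eq_bigr do rewrite expr1n; rewrite sumr_const card_ord.
have /esym/eqP := subrX1 c n.
by rewrite cn1 subrr mulf_eq0 subr_eq0 (negPf c_neq1) => /eqP.
Qed.

Lemma prime_prim_root (z : R) :
  prime n -> z ^+ n = 1 -> z != 1 -> n.-primitive_root z.
Proof.
move=> n_prime zn1 z_neq1.
have [m m_prim m_dvd] := prim_order_exists (prime_gt0 n_prime) zn1.
case/orP: ((primeP n_prime).2 m m_dvd) => /eqP m_eq; last by rewrite -m_eq.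
move: m_prim z_neq1; rewrite m_eq => /prim_expr_order.
by rewrite expr1 => ->; rewrite eqxx.
Qed.
End UnityRoots.

Section DiscreteFourier.
Variables (F : fieldType) (n : nat).

Definition dft (o : F) (a : 'I_n -> F) (k : nat) : F :=
  \sum_(j < n) o ^+ (j * k) * a j.

Lemma rmorph_dft (f : {rmorphism F -> F}) o a k :
  f (dft o a k) = dft (f o) (f \o a) k.
Proof.
by rewrite rmorph_sum; apply: eq_bigr => j _; rewrite rmorphM rmorphXn.
Qed.

Variable o : F.
Hypothesis o_prim : n.-primitive_root o.

Lemma dft_periodic a k : dft o a (k + n)%N = dft o a k.
Proof.
apply: eq_bigr => j _.
rewrite mulnDr exprD (mulnC j n) (exprM o n).
by rewrite (prim_expr_order o_prim) expr1n mulr1.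
Qed.

Lemma dft_autocorrelation (a b : 'I_n -> F) s :
  (forall j, b j * a j = 1) ->
  \sum_(k < n) dft o^-1 b k * dft o a (k + s)%N = n%:R ^+ 2 * (n %| s)%N%:R.
Proof.
move=> ba.
have o_neq0 : o != 0.
  by rewrite (prim_root_eq0 o_prim) -lt0n (prim_order_gt0 o_prim).
have expr_order m : (o ^+ m) ^+ n = 1.
  by rewrite -exprM mulnC exprM (prim_expr_order o_prim) expr1n.
(* Orthogonality of characters: summing over [k] kills the terms [j != j']. *)
have geom (j j' : 'I_n) :
    \sum_(k < n) (o^-1 ^+ j * o ^+ j') ^+ k = if j == j' then n%:R else 0.
  rewrite sum_expr_unity; last by rewrite exprMn !exprVn !expr_order invr1 mulr1.
  have oj_neq0 : o ^+ j != 0 by rewrite expf_neq0.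
  rewrite exprVn -(inj_eq (mulfI oj_neq0)) mulVKf // mulr1 eq_sym.
  by rewrite (eq_prim_root_expr o_prim) !modn_small.
transitivity (\sum_(j < n) \sum_(j' < n)
    b j * a j' * o ^+ (j' * s) * \sum_(k < n) (o^-1 ^+ j * o ^+ j') ^+ k).
  under eq_bigr => k _ do rewrite mulr_suml.
  under eq_bigr => k _ do under eq_bigr => j _ do rewrite mulr_sumr.
  rewrite exchange_big; apply: eq_bigr => j _.
  rewrite exchange_big; apply: eq_bigr => j' _.
  rewrite mulr_sumr; apply: eq_bigr => k _.
  rewrite exprMn -!exprM mulnDr exprD (mulnC j k) (mulnC j' k); ring.
transitivity (n%:R * \sum_(j < n) (o ^+ s) ^+ j).
  rewrite mulr_sumr; apply: eq_bigr => j _.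
  rewrite (bigD1 j) //= geom eqxx big1 ?addr0 => [|j' /negPf j'_neq]; last first.
    by rewrite geom eq_sym j'_neq mulr0.
  by rewrite ba mul1r mulrC (mulnC j s) exprM.
rewrite sum_expr_unity ?expr_order // -(prim_order_dvd o_prim).
by case: (n %| s)%N; rewrite ?mulr1 ?mulr0.
Qed.
End DiscreteFourier.

Section UnitCircle.
Variable R : realType.

Lemma expiD (a b : R) : expi a * expi b = expi (a + b).
Proof. by rewrite /expi /= cosD sinD; congr (_ +i* _)%C; ring. Qed.

Lemma expi0 : expi (0 : R) = 1.
Proof. by rewrite /expi cos0 sin0. Qed.

Lemma expiMn (t : R) k : expi t ^+ k = expi (t *+ k).
Proof. by elim: k => [|k IHk]; rewrite ?expi0 // exprS IHk expiD mulrS. Qed.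

Lemma conj_expi (t : R) : conjc (expi t) = expi (- t).
Proof. by rewrite /expi /= cosN sinN. Qed.

Lemma conj_expiK (t : R) : conjc (expi t) * expi t = 1.
Proof. by rewrite conj_expi expiD addNr expi0. Qed.

Lemma conj_expiV (t : R) : conjc (expi t) = (expi t)^-1.
Proof.
by rewrite (@mulr1_eq _ (expi t) (conjc (expi t))) // mulrC conj_expiK.
Qed.

Lemma expi_2pi3_prim : 3.-primitive_root (expi (2 * pi / 3 : R)).
Proof.
have pi_pos := pi_gt0 R.
apply: prime_prim_root => //.
  rewrite expiMn.
  have -> : (2 * pi / 3) *+ 3 = pi *+ 2 :> R.
    by rewrite -[LHS]mulr_natr -[RHS]mulr_natr; field.
  by rewrite /expi cos2pi sin2pi.
apply/eqP => /(congr1 (@complex.Im R)) /= sin_eq0.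
have : 0 < sin (2 * pi / 3 : R) by apply: sin_gt0_pi; apply/andP; split; lra.
by rewrite sin_eq0 ltxx.
Qed.

Lemma expi_N2pi3 : expi (- (2 * pi / 3)) = expi (2 * pi / 3 : R) ^+ 2.
Proof.
rewrite -conj_expi conj_expiV; apply: mulr1_eq.
by rewrite -exprS (prim_expr_order expi_2pi3_prim).
Qed.
End UnitCircle.

Lemma eq_mulg_shift (gT : finGroupType) (g h d e : gT) :
  (g * d == h * e)%g = (h^-1 * g == e * d^-1)%g.
Proof.
by rewrite -(can2_eq (mulKVg h) (mulKg h)) mulgA (can2_eq (mulgK d) (mulgKV d)).
Qed.

Section WalkEntries.
Variables (R : realType) (gT : finGroupType) (Delta : {set gT}) (w : gT -> R[i]).

Lemma walk_adj_mulE (g h : gT) :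
  \sum_k conjc (walk_entry Delta w k g) * walk_entry Delta w k h =
  \sum_(d in Delta) \sum_(e in Delta)
    conjc (w d) * w e * ((h^-1 * g == e * d^-1)%g)%:R.
Proof.
rewrite /walk_entry.
under eq_bigr => k _ do rewrite rmorph_sum mulr_suml.
rewrite exchange_big; apply: eq_bigr => d _.
under eq_bigr => k _ do rewrite mulr_sumr.
rewrite exchange_big; apply: eq_bigr => e _.
rewrite (bigD1 (g * d)%g) // big1 ?addr0 => [|k /andP[_ /negPf ->]].
  by rewrite eqxx eq_mulg_shift rmorphM rmorph_nat mulr1 mulrA; apply: addr0.
by rewrite mulr0n mulr0 rmorph0 mul0r.
Qed.

Lemma walk_mul_adjE (g h : gT) :
  \sum_k walk_entry Delta w g k * conjc (walk_entry Delta w h k) =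
  \sum_(d in Delta) \sum_(e in Delta)
    w d * conjc (w e) * ((h^-1 * g == e^-1 * d)%g)%:R.
Proof.
rewrite /walk_entry.
under eq_bigr => k _ do rewrite rmorph_sum mulr_sumr.
under eq_bigr => k _ do under eq_bigr => e _ do rewrite mulr_suml.
rewrite exchange_big.
under eq_bigr => e _ do rewrite exchange_big.
rewrite exchange_big; apply: eq_bigr => d _; apply: eq_bigr => e _.
under eq_bigr => k _ do
  rewrite ![(_ == k * _)%g]eq_sym !(can2_eq (mulgK _) (mulgKV _)).
rewrite (bigD1 (g * d^-1)%g) // big1 => [|k /andP[_ /negPf ->]].
  rewrite eqxx eq_mulg_shift invgK rmorphM rmorph_nat mulr1 mulrA.
  by rewrite mulrAC; apply: addr0.
by rewrite mulr0n mulr0 mul0r.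
Qed.
End WalkEntries.

(* The relations of the presentation <x, y | x^2, y^2, (xy)^3> of S_3;
   [x != y] rules out its degenerate quotients. *)
Definition S3_generators (gT : finGroupType) (x y : gT) : Prop :=
  [/\ (x * x = 1)%g, (y * y = 1)%g, ((x * y) ^+ 3 = 1)%g & x != y].

Section ThreeReflections.
Local Open Scope group_scope.
Variables (gT : finGroupType) (x y : gT).
Hypothesis xy_gen : S3_generators x y.
Local Notation z := (x * y * x).
Local Notation Delta := [set x; y; z].

Lemma reflectionsV : [/\ x^-1 = x, y^-1 = y & z^-1 = z].
Proof.
have [xx yy _ _] := xy_gen.
have xV : x^-1 = x by apply/eqP; rewrite eq_invg_mul xx.
have yV : y^-1 = y by apply/eqP; rewrite eq_invg_mul yy.
by split; rewrite // !invMg xV yV mulgA.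
Qed.

Lemma reflection_products :
  [/\ y * z = x * y, z * x = x * y, x * z = y * x & z * y = y * x].
Proof.
have [xx yy xy3 _] := xy_gen; have [xV yV zV] := reflectionsV.
have yx_eq : y * x = x * y * (x * y).
  transitivity (x * y)^-1; first by rewrite invMg xV yV.
  by apply/eqP; rewrite eq_invg_mul -xy3 2!expgS expg1.
have zy : z * y = y * x by rewrite yx_eq !mulgA.
split=> //; last 2 first.
- by rewrite -mulgA xx mulg1.
- by rewrite !mulgA xx mul1g.
transitivity (z * y)^-1; first by rewrite invMg zV yV.
by rewrite zy invMg xV yV.
Qed.

Lemma reflections_distinct : [/\ x != y, x != z & y != z].
Proof.
have [xx yy _ x_neq_y] := xy_gen; have [yz zx _ _] := reflection_products.
have xy_neq1 : x * y != 1.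
  apply: contra x_neq_y => /eqP xy1.
  by apply/eqP; rewrite -(mulgK y x) xy1 mul1g; have [_ -> _] := reflectionsV.
split=> //; apply: contra xy_neq1 => /eqP eq_z.
- by rewrite -zx -eq_z xx.
- by rewrite -yz -eq_z yy.
Qed.

Lemma sum_reflections (V : nmodType) (F : gT -> V) :
  \sum_(d in Delta) F d = (F x + F y + F z)%R.
Proof.
have [x_neq_y x_neq_z y_neq_z] := reflections_distinct.
have -> : Delta = x |: (y |: [set z]) by apply/setP => d; rewrite !inE orbA.
rewrite !big_setU1 ?big_set1 ?inE ?negb_or ?x_neq_y ?x_neq_z ?y_neq_z //=.
by rewrite GRing.addrA.
Qed.

End ThreeReflections.

Section ReflectionWalk.
Variables (gT : finGroupType) (x y : gT).
Hypothesis xy_gen : S3_generators x y.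
Local Notation z := (x * y * x)%g.
Local Notation Delta := [set x; y; z].

Lemma reflection_invg d : d \in Delta -> d^-1%g = d.
Proof.
by have [? ? ?] := reflectionsV xy_gen; rewrite !inE -orbA => /or3P[] /eqP ->.
Qed.

Lemma sum_reflection_pairs (V : comPzRingType) (f : gT -> gT -> V) (q : gT) :
  \sum_(d in Delta) \sum_(e in Delta) f d e * (q == e * d)%g%:R =
    (f x x + f y y + f z z) * (q == 1)%g%:R
  + (f y x + f z y + f x z) * (q == x * y)%g%:R
  + (f x y + f y z + f z x) * (q == y * x)%g%:R.
Proof.
have [xx yy _ _] := xy_gen; have [yz zx xz zy] := reflection_products xy_gen.
have zz : (z * z = 1)%g by have [_ _ {2}<-] := reflectionsV xy_gen; rewrite mulgV.
rewrite !(sum_reflections xy_gen) xx yy zz yz zx xz zy; ring.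
Qed.

Lemma S3_walk_unitary (R : realType) (w : gT -> R[i]) :
  let c := fun d e => conjc (w d) * w e in
  c x x + c y y + c z z = 1 -> c x y + c y z + c z x = 0 ->
  c x z + c y x + c z y = 0 ->
  unitary_op (walk_entry Delta w).
Proof.
move=> c norm1 corr1 corr2.
have eq_1 (g h : gT) : (h^-1 * g == 1)%g = (g == h).
  by rewrite [RHS]eq_sym (eq_mulVg1 h g).
split=> g h.
- rewrite walk_adj_mulE.
  under eq_bigr => d dD do under eq_bigr => e _ do rewrite (reflection_invg dD).
  rewrite (sum_reflection_pairs (fun d e => conjc (w d) * w e)) eq_1 -/c.
  transitivity ((c x x + c y y + c z z) * (g == h)%:R
      + (c x z + c y x + c z y) * (h^-1 * g == x * y)%g%:R
      + (c x y + c y z + c z x) * (h^-1 * g == y * x)%g%:R).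
    by rewrite /c; ring.
  by rewrite norm1 corr1 corr2 !mul0r !addr0 mul1r.
- rewrite walk_mul_adjE.
  under eq_bigr => d _ do under eq_bigr => e eD do rewrite (reflection_invg eD).
  rewrite (sum_reflection_pairs (fun d e => w d * conjc (w e))) eq_1.
  transitivity ((c x x + c y y + c z z) * (g == h)%:R
      + (c x y + c y z + c z x) * (h^-1 * g == x * y)%g%:R
      + (c x z + c y x + c z y) * (h^-1 * g == y * x)%g%:R).
    by rewrite /c; ring.
  by rewrite norm1 corr1 corr2 !mul0r !addr0 mul1r.
Qed.
End ReflectionWalk.

Section SharedTranspositions.
Local Open Scope group_scope.
Variables (T : finType) (a b c : T).
Hypotheses (a_neq_b : a != b) (b_neq_c : b != c) (a_neq_c : a != c).

Lemma tperm_shared_neq : tperm a b != tperm b c.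
Proof.
apply: contra a_neq_b => /eqP/permP/(_ a).
by rewrite tpermL tpermD 1?eq_sym // => ->.
Qed.

Lemma tperm_shared_expg3 : (tperm a b * tperm b c) ^+ 3 = 1.
Proof.
have b_neq_a : b != a by rewrite eq_sym.
have c_neq_b : c != b by rewrite eq_sym.
have c_neq_a : c != a by rewrite eq_sym.
have r_a : tperm b c (tperm a b a) = c by rewrite !tpermL.
have r_b : tperm b c (tperm a b b) = a by rewrite tpermR (tpermD b_neq_a c_neq_a).
have r_c : tperm b c (tperm a b c) = b by rewrite (tpermD a_neq_c b_neq_c) tpermR.
apply/permP => i; rewrite permX perm1 /= !permM.
have [<-|a_neq_i] := eqVneq a i; first by rewrite r_a r_c r_b.
have [<-|b_neq_i] := eqVneq b i; first by rewrite r_b r_a r_c.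
have [<-|c_neq_i] := eqVneq c i; first by rewrite r_c r_b r_a.
by do 3 rewrite (tpermD a_neq_i b_neq_i) (tpermD b_neq_i c_neq_i).
Qed.
End SharedTranspositions.

Lemma s3x_s3y_generators : S3_generators s3x s3y.
Proof.
have ord3_neq (i j : nat) :
    (i < 3)%N -> (j < 3)%N -> i != j -> (inord i : 'I_3) != inord j.
  move=> ilt jlt; apply: contra => /eqP/(congr1 val).
  by rewrite /= !inordK // => ->.
have n01 : (inord 0 : 'I_3) != inord 1 by exact: ord3_neq.
have n12 : (inord 1 : 'I_3) != inord 2 by exact: ord3_neq.
have n02 : (inord 0 : 'I_3) != inord 2 by exact: ord3_neq.
by split; rewrite ?tperm2 ?tperm_shared_expg3 ?tperm_shared_neq.
Qed.

Section WalkCoefficients.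
Variables (R : realType) (phi1 phi2 : R).
Local Notation om := (expi (2 * pi / 3 : R)).

(* W_x, W_y, W_z are [walk_coef3 0], [walk_coef3 1], [walk_coef3 2]. *)
Definition walk_coef3 (k : nat) : R[i] :=
  3^-1 * dft om (fun j : 'I_3 => [:: 1; expi phi1; expi phi2]`_j) k.

Lemma walk_coef3E k :
  walk_coef3 k = 3^-1 * (1 + om ^+ k * expi phi1 + om ^+ (2 * k) * expi phi2).
Proof.
rewrite /walk_coef3 /dft !big_ord_recr big_ord0 /=.
by rewrite add0r mul0n mul1n expr0 mulr1.
Qed.

Lemma walk_coef3_periodic k : walk_coef3 (k + 3)%N = walk_coef3 k.
Proof. by rewrite /walk_coef3 (dft_periodic (expi_2pi3_prim R)). Qed.

Lemma walk_coef3_autocorrelation s :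
  conjc (walk_coef3 0) * walk_coef3 s
  + conjc (walk_coef3 1) * walk_coef3 (1 + s)
  + conjc (walk_coef3 2) * walk_coef3 (2 + s) = (3 %| s)%N%:R.
Proof.
transitivity (\sum_(k < 3) conjc (walk_coef3 k) * walk_coef3 (k + s)%N).
  by rewrite !big_ord_recr big_ord0 /= add0r.
have conj_coef k : conjc (walk_coef3 k) =
    3^-1 * dft om^-1 (fun j : 'I_3 => conjc [:: 1; expi phi1; expi phi2]`_j) k.
  rewrite /walk_coef3 rmorphM fmorphV rmorph_nat rmorph_dft.
  by congr (_ * dft _ _ _); exact: conj_expiV.
under eq_bigr do rewrite conj_coef mulrACA.
rewrite -mulr_sumr dft_autocorrelation ?expi_2pi3_prim //.
  by rewrite mulrA -expr2 -exprMn mulVf ?expr1n ?mul1r // pnatr_eq0.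
by case=> -[|[|[|//]]] ?; rewrite [nth _ _ _]/= ?conjc1 ?mulr1 ?conj_expiK.
Qed.
End WalkCoefficients.

Theorem mainTheorem8 (R : realType) (phi1 phi2 : R) :
  let om := expi (2 * pi / 3 : R) in
  let omb := expi (- (2 * pi / 3) : R) in
  let Wx : R[i] := 3^-1 * (1 + expi phi1 + expi phi2) in
  let Wy : R[i] := 3^-1 * (1 + om * expi phi1 + omb * expi phi2) in
  let Wz : R[i] := 3^-1 * (1 + omb * expi phi1 + om * expi phi2) in
  let w : 'S_3 -> R[i] :=
    fun g => if g == s3x then Wx else if g == s3y then Wy else Wz in
  Wx != 0 -> Wy != 0 -> Wz != 0 ->
  homogeneous_scalar_QW s3Delta w /\
  (exists w' : 'S_3 -> R[i], homogeneous_scalar_QW s3Delta w').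
Proof.
move=> om omb Wx Wy Wz w Wx_neq0 Wy_neq0 Wz_neq0.
have gen := s3x_s3y_generators.
have [x_neq_y x_neq_z y_neq_z] := reflections_distinct gen.
set c := walk_coef3 phi1 phi2.
have wx : w s3x = Wx by rewrite /w eqxx.
have wy : w s3y = Wy by rewrite /w eq_sym (negPf x_neq_y) eqxx.
have wz : w s3z = Wz by rewrite /w eq_sym (negPf x_neq_z) eq_sym (negPf y_neq_z).
have cx : Wx = c 0 by rewrite /c walk_coef3E muln0 expr0 !mul1r.
have cy : Wy = c 1 by rewrite /c walk_coef3E expr1 muln1 -expi_N2pi3.
have cz : Wz = c 2.
  rewrite /c walk_coef3E -expi_N2pi3 (_ : 2 * 2 = 1 + 3)%N // exprD.
  by rewrite (prim_expr_order (expi_2pi3_prim R)) mulr1.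
suff w_QW : homogeneous_scalar_QW s3Delta w by split; last exists w.
split.
  by move=> d; rewrite !inE -orbA => /or3P[] /eqP ->; rewrite ?wx ?wy ?wz.
apply: (S3_walk_unitary gen) => /=; rewrite wx wy wz cx cy cz.
- by have := walk_coef3_autocorrelation phi1 phi2 0; rewrite !addn0.
- have := walk_coef3_autocorrelation phi1 phi2 1.
  by rewrite (walk_coef3_periodic _ _ 0).
- have := walk_coef3_autocorrelation phi1 phi2 2.
  by rewrite (walk_coef3_periodic _ _ 0) (walk_coef3_periodic _ _ 1).
Qed.
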